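(* Let $\Lambda$ be a $\mathbb Z$-lattice with an automorphism $M_h$ of finite order. Let $\Lambda^{(1)},\dots,\Lambda^{(k)}\subset\Lambda$ be Orlik blocks with cyclic generators $e^{(1)},\dots,e^{(k)}$ such that $\Lambda^{(1)}+\dots+\Lambda^{(k)}=\Lambda^{(1)}\oplus\dots\oplus\Lambda^{(k)}$, and let $g$ be an automorphism of $\Lambda^{(1)}\oplus\dots\oplus\Lambda^{(k)}$ commuting with $M_h$. Then there are unique polynomials $p_{ij}\in\mathbb Z[t]$ of degree $<\mathrm{rank}\,\Lambda^{(i)}$ with $g(e^{(j)})=\sum_{i=1}^kp_{ij}(M_h)(e^{(i)})$. Suppose moreover that $p_0\in\mathbb Z[t]$ divides $\gcd(p_{\Lambda^{(1)}},\dots,p_{\Lambda^{(k)}})$ and that $g=\mathrm{id}$ on $\Lambda^{(j)}_{p_{\Lambda^{(j)}}/p_0}$ for every $j$. Then $p_{ij}=\delta_{ij}+\frac{p_{\Lambda^{(i)}}}{p_0}q_{ij}$ for suitable $q_{ij}\in\mathbb Z[t]$ of degree $<\deg p_0$. If furthermore $\xi$ is a root of unity with $p_0(\xi)=0$, then with respect to the eigenvectors $v(e^{(j)},\xi)\in\Lambda^{(j)}_\xi$, $$g(v(e^{(j)},\xi))=\sum_{i=1}^k\Bigl(\delta_{ij}+\frac{p_{\Lambda^{(j)}}}{p_0}q_{ij}\Bigr)(\xi)\cdot v(e^{(i)},\xi).$$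
   Context: An Orlik block is a nonzero primitive $M_h$-invariant sublattice $\Lambda^{(1)}\subset\Lambda$ with a cyclic generator $e^{(1)}$, i.e. $\Lambda^{(1)}=\bigoplus_{j=0}^{\deg p_{\Lambda^{(1)}}-1}\mathbb ZM_h^j(e^{(1)})$, where $p_{\Lambda^{(1)}}$ is the characteristic polynomial of $M_h$ on $\Lambda^{(1)}$. For an $M_h$-invariant sublattice $B$ and a product $p$ of cyclotomic polynomials dividing $p_B$, $B_p:=(\bigoplus_{\lambda:p(\lambda)=0}B_\lambda)\cap B$, where $B_\lambda=\ker(M_h-\lambda)\subset B\otimes\mathbb C$. For an eigenvalue $\lambda$ of $M_h$ on an Orlik block with generator $e$, $v(e,\lambda):=\frac{p_{\Lambda^{(1)}}}{t-\lambda}(M_h)(e)$ (an eigenvector with eigenvalue $\lambda$). *)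

From HB Require Import structures.
From mathcomp Require Import all_boot all_order all_algebra.
From mathcomp Require Import algC.
Set Implicit Arguments. Unset Strict Implicit. Unset Printing Implicit Defensive.
Import Order.TTheory GRing.Theory Num.Theory.
Local Open Scope ring_scope.

(* Conventions: the lattice Lambda is Z^n, elements are row vectors
   'rV[int]_n, and an endomorphism acts on the right: v |-> v *m M. *)

Definition toQ (z : int) : rat := z%:~R.
Definition toC (z : int) : algC := z%:~R.

Definition polyact (R : comNzRingType) (n : nat) (M : 'M[R]_n) (p : {poly R})
  (v : 'rV[R]_n) : 'rV[R]_n :=
  \sum_(m < size p) p`_m *: (v *m M ^+ m).

Definition cycmx (n d : nat) (M : 'M[int]_n) (e : 'rV[int]_n) : 'M[int]_(d, n) :=
  \matrix_(j < d) (e *m M ^+ j).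

Definition in_zspan (n d : nat) (B : 'M[int]_(d, n)) (v : 'rV[int]_n) : Prop :=
  exists c : 'rV[int]_d, v = c *m B.

(* Orlik block with cyclic generator e, of rank d, on which M acts through
   the matrix C (in the basis e, Me, ..., M^(d-1) e):
   nonzero, the M^j e (j<d) are linearly independent, the span is
   M-invariant (E M = C E), and it is primitive: (B tensor Q) cap Lambda = B. *)
Definition orlik_block (n d : nat) (M : 'M[int]_n) (e : 'rV[int]_n)
  (C : 'M[int]_d) : Prop :=
  let E := cycmx d M e in
  [/\ (0 < d)%N,
      row_free (map_mx toQ E),
      E *m M = C *m E &
      forall v : 'rV[int]_n, (map_mx toQ v <= map_mx toQ E)%MS -> in_zspan E v].

Definition pLam (d : nat) (C : 'M[int]_d) : {poly int} := char_poly C.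

(* v lies in B_p = (\bigoplus_{lambda : p(lambda)=0} B_lambda) cap B,
   where B_lambda = ker (M - lambda) in B tensor C. *)
Definition in_Bp (n d : nat) (M : 'M[int]_n) (B : 'M[int]_(d, n))
  (p : {poly int}) (v : 'rV[int]_n) : Prop :=
  in_zspan B v /\
  exists (sl : seq algC) (w : algC -> 'rV[algC]_n),
    (forall l, l \in sl ->
       [/\ root (map_poly toC p) l,
           (w l <= map_mx toC B)%MS &
           w l *m map_mx toC M = l *: w l]) /\
    map_mx toC v = \sum_(l <- sl) w l.

Definition veig (n : nat) (M : 'M[int]_n) (pB : {poly int}) (e : 'rV[int]_n)
  (l : algC) : 'rV[algC]_n :=
  polyact (map_mx toC M) (map_poly toC pB %/ ('X - l%:P)) (map_mx toC e).

(* By Cayley-Hamilton for the matrix C_i of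
   M_h on the block Lambda^(i), f(M_h) e^(i) depends only on f mod p_Lambda^(i),
   so, the sum being direct, the coordinates of g(e^(j)) are unique residues p_ij.
   As M_h has finite order m, the averages (1/m) sum_t l^-t M_h^t over the m-th
   roots of unity l split any v killed by (p_Lambda/p0)(M_h) into eigenvectors for
   roots of p_Lambda/p0; so p0(M_h) e^(j) lies in Lambda^(j)_(p_Lambda/p0) and is
   fixed by g.  Comparing coordinates, p_Lambda^(i) divides (p_ij - delta_ij) p0,
   i.e. p_Lambda^(i)/p0 divides p_ij - delta_ij.  Finally v(e, xi) = h(M_h) e with
   h = p_Lambda/(t - xi) is a xi-eigenvector, and the polynomial identity
   p_ij h_j = (delta_ij + (p_Lambda^(j)/p0) q_ij) h_i gives the image of
   v(e^(j), xi). *)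

From HB Require Import structures.
From mathcomp Require Import all_boot all_order all_algebra.
From mathcomp Require Import algC cyclotomic.
From Stdlib Require Import FunctionalExtensionality.
Set Implicit Arguments. Unset Strict Implicit. Unset Printing Implicit Defensive.
Import Order.TTheory GRing.Theory Num.Theory.
Local Open Scope ring_scope.

HB.instance Definition _ := GRing.RMorphism.copy toQ (intr : int -> rat).
HB.instance Definition _ := GRing.RMorphism.copy toC (intr : int -> algC).

Lemma polyactE (R : comNzRingType) n (M : 'M[R]_n.+1) p v :
  polyact M p v = v *m horner_mx M p.
Proof.
rewrite -[in RHS](coefK p) poly_def rmorph_sum mulmx_sumr; apply: eq_bigr => i _.
rewrite -mul_polyC rmorphM /= horner_mx_C rmorphXn /= horner_mx_X -mulmxE.
by rewrite mul_scalar_mx scalemxAr.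
Qed.

Lemma horner_mx_eigen (R : comNzRingType) n (A : 'M[R]_n.+1) (w : 'rV_n.+1) l q :
  w *m A = l *: w -> w *m horner_mx A q = q.[l] *: w.
Proof.
move=> wA; elim/poly_ind: q => [|q c IHq].
  by rewrite rmorph0 mulmx0 horner0 scale0r.
rewrite rmorphD rmorphM /= horner_mx_X horner_mx_C mulmxDr -mulmxE mulmxA IHq.
by rewrite -scalemxAl wA scalerA mul_mx_scalar !hornerE scalerDl.
Qed.

Lemma mulmx_horner_intertwine (R : comNzRingType) m n
    (A : 'M[R]_n.+1) (B : 'M[R]_m.+1) E p :
  E *m A = B *m E -> E *m horner_mx A p = horner_mx B p *m E.
Proof.
move=> EA; elim/poly_ind: p => [|p c IHp]; first by rewrite !rmorph0 mulmx0 mul0mx.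
rewrite !rmorphD !rmorphM /= !horner_mx_X !horner_mx_C mulmxDr mulmxDl -!mulmxE.
by rewrite mulmxA IHp -!mulmxA EA mul_mx_scalar mul_scalar_mx.
Qed.

Lemma mulmx_exp_intertwine (R : pzRingType) m n (A : 'M[R]_n) (B : 'M[R]_m) E t :
  E *m A = B *m E -> E *m A ^+ t = B ^+ t *m E.
Proof.
move=> EA; elim: t => [|t IHt]; first by rewrite !expr0 mulmx1 mul1mx.
by rewrite !exprSr -!mulmxE mulmxA IHt -mulmxA EA mulmxA.
Qed.

Lemma sumr_exp_root_unity (R : idomainType) (x : R) m :
  x ^+ m = 1 -> x != 1 -> \sum_(a < m) x ^+ a = 0.
Proof.
move=> xm x_neq1; apply/eqP; have := subrX1 x m; rewrite xm subrr => /esym/eqP.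
by rewrite mulf_eq0 subr_eq0 (negbTE x_neq1).
Qed.

Lemma sumr_periodic_shift (V : zmodType) m (F : nat -> V) :
  F m = F 0%N -> \sum_(t < m) F t.+1 = \sum_(t < m) F t.
Proof.
move=> Fm; have recl : \sum_(t < m.+1) F t = F 0%N + \sum_(t < m) F t.+1.
  exact: big_ord_recl.
apply: (addIr (F 0%N)); rewrite addrC -recl -[in RHS]Fm.
exact: big_ord_recr.
Qed.

Section EigenProjection.

Variables (F : fieldType) (n : nat) (A : 'M[F]_n) (m : nat).

Definition eigenproj (l : F) (v : 'rV[F]_n) : 'rV[F]_n :=
  m%:R^-1 *: \sum_(t < m) l ^- t *: (v *m A ^+ t).

Lemma eigenprojP l v : (0 < m)%N -> A ^+ m = 1 -> l ^+ m = 1 ->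
  eigenproj l v *m A = l *: eigenproj l v.
Proof.
move=> m_gt0 Am lm; have l_neq0 : l != 0.
  by apply: contra_eq_neq lm => ->; rewrite expr0n gtn_eqF // eq_sym oner_neq0.
rewrite /eigenproj -scalemxAl scalerA mulrC -scalerA; congr (_ *: _).
pose G t := l ^- t *: (v *m A ^+ t).
rewrite -[in RHS](@sumr_periodic_shift _ _ G); last by rewrite /G Am lm invr1 !expr0.
rewrite mulmx_suml scaler_sumr; apply: eq_bigr => t _.
by rewrite -scalemxAl -mulmxA mulmxE -exprSr scalerA [l ^+ t.+1]exprS invfM mulVKf.
Qed.

Lemma eigenproj_sub r (S : 'M_(r, n)) l v :
  (forall t, (v *m A ^+ t <= S)%MS) -> (eigenproj l v <= S)%MS.
Proof. by move=> vS; apply/scalemx_sub/summx_sub => t _; apply/scalemx_sub. Qed.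

Lemma sum_eigenproj z v : m.-primitive_root z -> m%:R != 0 :> F ->
  \sum_(a < m) eigenproj (z ^+ a) v = v.
Proof.
move=> zprim m_neq0; have m_gt0 := prim_order_gt0 zprim.
have orthogonal (t : 'I_m) : t != Ordinal m_gt0 -> \sum_(a < m) (z ^+ a) ^- t = 0.
  move=> t_neq0; rewrite (eq_bigr (fun a : 'I_m => (z ^- t) ^+ a)) => [|a _]; last first.
    by rewrite exprVn -!exprM mulnC.
  apply: sumr_exp_root_unity.
    by rewrite exprVn -exprM mulnC exprM (prim_expr_order zprim) expr1n invr1.
  by rewrite invr_eq1 -[1](expr0 z) (eq_prim_root_expr zprim) mod0n modn_small.
rewrite /eigenproj -scaler_sumr exchange_big /= (bigD1 (Ordinal m_gt0)) //=.
rewrite [X in _ + X]big1 => [|t /orthogonal t0]; last by rewrite -scaler_suml t0 scale0r.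
rewrite -scaler_suml (eq_bigr (fun=> 1)) => [|a _]; last by rewrite expr0 invr1.
by rewrite addr0 sumr_const card_ord expr0 mulmx1 scalerA mulVf ?scale1r.
Qed.

End EigenProjection.

Lemma eigenproj_horner (F : fieldType) n m (A : 'M[F]_n.+1) l v q :
  v *m horner_mx A q = 0 -> eigenproj A m l v *m horner_mx A q = 0.
Proof.
move=> vq; rewrite /eigenproj -scalemxAl mulmx_suml big1 ?scaler0 // => t _.
have AtA : comm_mx (A ^+ t) A by rewrite /comm_mx mulmxE -exprSr -exprS.
by rewrite -scalemxAl -mulmxA (comm_mx_horner q AtA) mulmxA vq mul0mx scaler0.
Qed.

Lemma in_Bp_annihilated n d (M : 'M[int]_n.+1) m (E : 'M[int]_(d, n.+1))
    (C : 'M[int]_d) s v :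
  (0 < m)%N -> M ^+ m = 1%:M -> E *m M = C *m E ->
  in_zspan E v -> v *m horner_mx M s = 0 -> in_Bp M E s v.
Proof.
move=> m_gt0 Mm EM vE vs; split=> //.
have [z zprim] := C_prim_root_exists m_gt0.
set A := map_mx toC M; pose w l := eigenproj A m l (map_mx toC v).
have Am : A ^+ m = 1 by rewrite /A -rmorphXn /= Mm map_mx1.
have w_sub l : (w l <= map_mx toC E)%MS.
  apply: eigenproj_sub => t; case: vE => c ->.
  rewrite /A -rmorphXn /= -map_mxM -mulmxA (mulmx_exp_intertwine _ EM) mulmxA.
  by rewrite map_mxM submxMl.
have w_ann l : w l *m horner_mx A (map_poly toC s) = 0.
  by apply: eigenproj_horner; rewrite /A -map_horner_mx -map_mxM vs map_mx0.
(* Only the nonzero components are listed: each listed l must be a root of s. *)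
exists [seq l <- [seq z ^+ a | a <- iota 0 m] | w l != 0], w; split.
  move=> l; rewrite mem_filter => /andP[wl_neq0 /mapP[a _ l_def]]; subst l.
  have w_eigen : w (z ^+ a) *m A = z ^+ a *: w (z ^+ a).
    by apply: eigenprojP; rewrite // exprAC (prim_expr_order zprim) expr1n.
  split=> //; move/eqP: (w_ann (z ^+ a)); rewrite (horner_mx_eigen _ w_eigen).
  by rewrite scaler_eq0 (negbTE wl_neq0) orbF.
rewrite big_filter big_rmcond => [|l /negPn/eqP //].
have -> : iota 0 m = index_iota 0 m by rewrite /index_iota subn0.
by rewrite big_map big_mkord sum_eigenproj // pnatr_eq0 -lt0n.
Qed.

Lemma size_modp_char_poly (R : idomainType) d (C : 'M[R]_d) (r : {poly R}) :
  (size (r %% char_poly C)%R <= d)%N.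
Proof. by rewrite -ltnS -(size_char_poly C) ltn_modp monic_neq0 // char_poly_monic. Qed.

Section CyclicBlock.

Variables (n d : nat) (M : 'M[int]_n.+1) (e : 'rV[int]_n.+1) (C : 'M[int]_d).
Local Notation E := (cycmx d M e).

Lemma horner_mx_cycmx (p : {poly int}) :
  (size p <= d)%N -> e *m horner_mx M p = poly_rV p *m E.
Proof.
move=> size_p; have p_def : p = \poly_(i < d) p`_i.
  apply/polyP => i; rewrite coef_poly; case: ltnP => // le_d_i.
  by rewrite nth_default // (leq_trans size_p le_d_i).
rewrite [in LHS]p_def poly_def rmorph_sum mulmx_sumr mulmx_sum_row; apply: eq_bigr => i _.
rewrite -mul_polyC rmorphM /= horner_mx_C rmorphXn /= horner_mx_X -mulmxE.
by rewrite mul_scalar_mx -scalemxAr rowK !mxE.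
Qed.

Lemma mul_cycmx c : c *m E = e *m horner_mx M (rVpoly c).
Proof. by rewrite horner_mx_cycmx ?size_poly // rVpolyK. Qed.

Hypotheses (d_gt0 : (0 < d)%N) (EM : E *m M = C *m E).

Lemma horner_mx_char_poly_cycmx : e *m horner_mx M (char_poly C) = 0.
Proof.
move: C EM d_gt0; case: d => // d' C' EM' _.
have -> : e = row 0 (cycmx d'.+1 M e) by rewrite rowK expr0 mulmx1.
by rewrite -row_mul (mulmx_horner_intertwine _ EM') Cayley_Hamilton mul0mx row0.
Qed.

Lemma horner_mx_modp_char_poly r :
  e *m horner_mx M r = e *m horner_mx M (r %% char_poly C).
Proof.
rewrite {1}(Pdiv.IdomainMonic.divp_eq (char_poly_monic C) r) [_ * char_poly C]mulrC.
rewrite rmorphD rmorphM /= mulmxDr -mulmxE mulmxA.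
by rewrite horner_mx_char_poly_cycmx mul0mx add0r.
Qed.

Lemma horner_mx_in_cycmx r : e *m horner_mx M r = poly_rV (r %% char_poly C) *m E.
Proof. by rewrite horner_mx_modp_char_poly horner_mx_cycmx ?size_modp_char_poly. Qed.

Lemma veig_eigen xi : root (map_poly toC (char_poly C)) xi ->
  veig M (char_poly C) e xi *m map_mx toC M = xi *: veig M (char_poly C) e xi.
Proof.
move=> xi_root; rewrite /veig polyactE.
set h := _ %/ _; have h_mul : h * ('X - xi%:P) = map_poly toC (char_poly C).
  by rewrite divpK // dvdp_XsubCl.
apply/eqP; rewrite -subr_eq0 -mul_mx_scalar -mulmxBr.
have -> : map_mx toC M - xi%:M = horner_mx (map_mx toC M) ('X - xi%:P).
  by rewrite rmorphB /= horner_mx_X horner_mx_C.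
rewrite -mulmxA mulmxE -rmorphM /= h_mul -map_horner_mx -map_mxM.
by rewrite horner_mx_char_poly_cycmx map_mx0.
Qed.

Lemma in_Bp_cofactor m s p0 : (0 < m)%N -> M ^+ m = 1%:M -> char_poly C = s * p0 ->
  in_Bp M E s (e *m horner_mx M p0).
Proof.
move=> m_gt0 Mm C_fact; apply: (in_Bp_annihilated m_gt0 Mm EM).
  by exists (poly_rV (p0 %% char_poly C)); apply: horner_mx_in_cycmx.
by rewrite -mulmxA mulmxE -rmorphM /= mulrC -C_fact horner_mx_char_poly_cycmx.
Qed.

End CyclicBlock.

Lemma orlik_block_cycmx_inj n d (M : 'M[int]_n) e (C : 'M_d) (c : 'rV_d) :
  orlik_block M e C -> c *m cycmx d M e = 0 -> c = 0.
Proof.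
case=> _ free _ _ cE; apply/matrixP => i j; apply: (@intr_inj rat).
have cQ0 : map_mx toQ c = 0.
  by apply: (row_free_inj free); rewrite /= -map_mxM cE map_mx0 mul0mx.
by move/matrixP/(_ i j): cQ0; rewrite !mxE.
Qed.

Lemma orlik_block_width_gt0 n d (M : 'M[int]_n) e (C : 'M_d) :
  orlik_block M e C -> (0 < n)%N.
Proof.
case=> d_gt0 /eqP free _ _; apply: leq_trans d_gt0 _.
by rewrite -free rank_leq_col.
Qed.

Lemma ltn_size_mul2l (R : idomainType) (s q p : {poly R}) :
  (size (s * q)%R < size (s * p)%R)%N -> (size q < size p)%N.
Proof.
have [->|q_neq0] := eqVneq q 0.
  by rewrite mulr0 size_poly0 !size_poly_gt0 mulf_eq0 negb_or => /andP[].
have [->|s_neq0] := eqVneq s 0; first by rewrite !mul0r size_poly0.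
have [->|p_neq0] := eqVneq p 0; first by rewrite mulr0 size_poly0.
by rewrite !size_mul // (polySpred s_neq0) !addSn /= ltn_add2l.
Qed.

Section BlockSum.

Variables (n k : nat) (M : 'M[int]_n.+1) (d : 'I_k -> nat).
Variables (e : 'I_k -> 'rV[int]_n.+1) (C : forall i, 'M[int]_(d i)).
Hypothesis block : forall i, orlik_block M (e i) (C i).

Let d_gt0 i : (0 < d i)%N. Proof. by case: (block i). Qed.
Let cycmxM i : cycmx (d i) M (e i) *m M = C i *m cycmx (d i) M (e i).
Proof. by case: (block i). Qed.

Local Notation hm := (horner_mx M).

Definition block_span (v : 'rV[int]_n.+1) : Prop :=
  exists c : forall i, 'rV[int]_(d i), v = \sum_(i < k) c i *m cycmx (d i) M (e i).

Lemma block_spanP v :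
  block_span v <-> exists P : 'I_k -> {poly int}, v = \sum_(i < k) e i *m hm (P i).
Proof.
split=> [[c ->]|[P ->]].
  by exists (fun i => rVpoly (c i)); apply: eq_bigr => i _; rewrite mul_cycmx.
exists (fun i => poly_rV (P i %% char_poly (C i))); apply: eq_bigr => i _.
exact: horner_mx_in_cycmx.
Qed.

Lemma block_span_horner v q : block_span v -> block_span (v *m hm q).
Proof.
move=> /block_spanP[P ->]; apply/block_spanP; exists (fun i => P i * q).
by rewrite mulmx_suml; apply: eq_bigr => i _; rewrite rmorphM -mulmxE mulmxA.
Qed.

Lemma block_spanZ c v : block_span v -> block_span (c *: v).
Proof. by move/(block_span_horner c%:P); rewrite horner_mx_C mul_mx_scalar. Qed.

Lemma block_spanM v : block_span v -> block_span (v *m M).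
Proof. by move/(block_span_horner 'X); rewrite horner_mx_X. Qed.

Lemma block_span_gen j : block_span (e j).
Proof.
apply/block_spanP; exists (fun i => (i == j)%:R).
rewrite (bigD1 j) //= big1 => [|i /negbTE->]; first by rewrite eqxx rmorph1 mulmx1 addr0.
by rewrite rmorph0 mulmx0.
Qed.

Hypothesis direct : forall c : forall i, 'rV[int]_(d i),
  \sum_(i < k) c i *m cycmx (d i) M (e i) = 0 -> forall i, c i *m cycmx (d i) M (e i) = 0.

Lemma block_coords_eq0 (P : 'I_k -> {poly int}) :
  \sum_(i < k) e i *m hm (P i) = 0 -> forall i, char_poly (C i) %| P i.
Proof.
move=> P0 i; apply/modp_eq0P.
have sum0 : \sum_(l < k) poly_rV (P l %% char_poly (C l)) *m cycmx (d l) M (e l) = 0.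
  by rewrite -[RHS]P0; apply: eq_bigr => l _; rewrite -horner_mx_in_cycmx.
have /(orlik_block_cycmx_inj (block i)) coords0 := direct sum0 i.
by rewrite -(poly_rV_K (size_modp_char_poly _ _)) coords0 linear0.
Qed.

Lemma block_coords_inj (P Q : 'I_k -> {poly int}) :
  (forall i, size (P i) <= d i)%N -> (forall i, size (Q i) <= d i)%N ->
  \sum_(i < k) e i *m hm (P i) = \sum_(i < k) e i *m hm (Q i) -> forall i, P i = Q i.
Proof.
move=> size_P size_Q PQ i; apply/eqP; rewrite -subr_eq0; apply/eqP.
have /modp_eq0 <- : char_poly (C i) %| P i - Q i.
  apply: (block_coords_eq0 (P := fun l => P l - Q l)).
  by under eq_bigr => l _ do rewrite rmorphB mulmxBr; rewrite sumrB PQ subrr.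
rewrite modp_small // size_char_poly ltnS (leq_trans (size_polyD _ _)) //.
by rewrite size_polyN geq_max size_P size_Q.
Qed.

Variable g : 'rV[int]_n.+1 -> 'rV[int]_n.+1.
Hypothesis gD : forall u v, block_span u -> block_span v -> g (u + v) = g u + g v.
Hypothesis g_span : forall v, block_span v -> block_span (g v).
Hypothesis gM : forall v, block_span v -> g (v *m M) = g v *m M.

Lemma g_zscale c v : block_span v -> g (c *: v) = c *: g v.
Proof.
move=> v_span; have span0 : block_span 0 by rewrite -(scale0r v); apply: block_spanZ.
have g0 : g 0 = 0 by apply: (addrI (g 0)); rewrite -gD ?addr0.
have span_muln t : block_span (v *+ t) by rewrite -scaler_nat; apply: block_spanZ.
have g_muln t : g (v *+ t) = g v *+ t.
  by elim: t => [|t IHt]; rewrite ?mulr0n ?g0 // !mulrS gD ?IHt.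
have gN w : block_span w -> g (- w) = - g w.
  move=> w_span; apply: (addrI (g w)); rewrite -gD ?subrr ?g0 //.
  by rewrite -scaleN1r; apply: block_spanZ.
case: c => t; first by rewrite -natz !scaler_nat g_muln.
by rewrite NegzE !scaleNr -natz !scaler_nat gN ?g_muln.
Qed.

Lemma g_horner q v : block_span v -> g (v *m hm q) = g v *m hm q.
Proof.
move=> v_span; elim/poly_ind: q => [|q c IHq].
  by rewrite !rmorph0 !mulmx0; have := g_zscale 0 v_span; rewrite !scale0r.
have span_q := block_span_horner q v_span.
have span_qM := block_spanM span_q; have span_cv := block_spanZ c v_span.
rewrite !rmorphD !rmorphM /= !horner_mx_X !horner_mx_C !mulmxDr -!mulmxE !mulmxA.
by rewrite !mul_mx_scalar gD ?gM ?g_zscale ?IHq.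
Qed.

Lemma block_coefs_exist : exists p : 'I_k -> 'I_k -> {poly int},
  (forall i j, size (p i j) <= d i)%N /\
  forall j, g (e j) = \sum_(i < k) e i *m hm (p i j).
Proof.
have coefs j : exists P : 'I_k -> {poly int},
    (forall i, size (P i) <= d i)%N /\ g (e j) = \sum_(i < k) e i *m hm (P i).
  have /block_spanP[P ->] := g_span (block_span_gen j).
  exists (fun i => P i %% char_poly (C i)); split=> [i|].
    exact: size_modp_char_poly.
  by apply: eq_bigr => i _; rewrite -horner_mx_modp_char_poly.
have [P PP] := fin_all_exists coefs.
by exists (fun i j => P j i); split=> [i j|j]; case: (PP j).
Qed.

Lemma block_coefs_cofactor p0 (s P : 'I_k -> {poly int}) j :
  (forall i, char_poly (C i) = s i * p0) ->
  (forall i, size (P i) <= d i)%N ->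
  g (e j) = \sum_(i < k) e i *m hm (P i) ->
  g (e j *m hm p0) = e j *m hm p0 ->
  forall i, exists q : {poly int}, (size q < size p0)%N /\ P i = (i == j)%:R + s i * q.
Proof.
move=> C_fact size_P gej fix_j i.
have /andP[_ p0_neq0] : (s i != 0) && (p0 != 0).
  by rewrite -negb_or -mulf_eq0 -C_fact monic_neq0 ?char_poly_monic.
have : char_poly (C i) %| (P i - (i == j)%:R) * p0.
  apply: (block_coords_eq0 (P := fun l => (P l - (l == j)%:R) * p0)).
  rewrite (eq_bigr (fun l => e l *m hm (P l) *m hm p0 - e l *m hm ((l == j)%:R * p0)))
    => [|l _]; last by rewrite mulrBl rmorphB mulmxBr rmorphM -mulmxE mulmxA.
  rewrite sumrB -mulmx_suml -gej -g_horner ?fix_j; last exact: block_span_gen.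
  rewrite (bigD1 j) //= big1 => [|l /negbTE->]; last by rewrite mul0r rmorph0 mulmx0.
  by rewrite eqxx mul1r addr0 subrr.
case/(Pdiv.IdomainMonic.dvdpP (char_poly_monic (C i))) => q.
rewrite C_fact mulrA => /(mulIf p0_neq0) Pq; exists q; split; last first.
  by rewrite mulrC -Pq addrC subrK.
apply: (@ltn_size_mul2l _ (s i)); rewrite -C_fact size_char_poly ltnS mulrC -Pq.
rewrite (leq_trans (size_polyD _ _)) // size_polyN geq_max size_P.
by case: (i == j); rewrite ?mulr1n ?mulr0n ?size_poly1 ?size_poly0 ?d_gt0.
Qed.

Variable GC : 'M[algC]_n.+1.
Hypothesis GC_ext : forall v, block_span v -> map_mx toC (g v) = map_mx toC v *m GC.

Lemma horner_mx_ext v h : block_span v ->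
  map_mx toC v *m horner_mx (map_mx toC M) h *m GC =
  map_mx toC (g v) *m horner_mx (map_mx toC M) h.
Proof.
move=> v_span; rewrite -!polyactE /polyact mulmx_suml; apply: eq_bigr => t _.
have hmXt : hm 'X^t = M ^+ t by rewrite rmorphXn /= horner_mx_X.
rewrite -scalemxAl -rmorphXn /= -!map_mxM -GC_ext -hmXt ?g_horner //.
exact: block_span_horner.
Qed.

Lemma veig_image p0 (s P Q : 'I_k -> {poly int}) j xi :
  (forall i, char_poly (C i) = s i * p0) ->
  g (e j) = \sum_(i < k) e i *m hm (P i) ->
  (forall i, P i = (i == j)%:R + s i * Q i) ->
  root (map_poly toC p0) xi ->
  veig M (char_poly (C j)) (e j) xi *m GC =
  \sum_(i < k) (map_poly toC ((i == j)%:R + s j * Q i)).[xi]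
                 *: veig M (char_poly (C i)) (e i) xi.
Proof.
move=> C_fact gej PQ xi_root; set MC := map_mx toC M.
pose h i := map_poly toC (char_poly (C i)) %/ ('X - xi%:P).
have C_root i : root (map_poly toC (char_poly (C i))) xi.
  by rewrite C_fact rmorphM rootM xi_root orbT.
have h_mul i : h i * ('X - xi%:P) = map_poly toC (char_poly (C i)).
  by rewrite divpK // dvdp_XsubCl.
have veigE i :
    veig M (char_poly (C i)) (e i) xi = map_mx toC (e i) *m horner_mx MC (h i).
  by rewrite /veig polyactE.
have P_h i : map_poly toC (P i) * h j = h i * map_poly toC ((i == j)%:R + s j * Q i).
  apply: (@mulIf _ ('X - xi%:P)); first by rewrite polyXsubC_eq0.
  rewrite -mulrA h_mul mulrAC h_mul -!rmorphM /= !C_fact PQ.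
  congr (map_poly _ _); case: eqVneq => [->|_]; first exact: mulrC.
  by rewrite mulr0n !add0r mulrACA [in RHS]mulrACA [Q i * _]mulrC.
rewrite veigE horner_mx_ext; last exact: block_span_gen.
rewrite gej raddf_sum mulmx_suml.
apply: eq_bigr => i _; rewrite /= map_mxM map_horner_mx -mulmxA mulmxE -rmorphM /=.
rewrite P_h rmorphM /= -mulmxE mulmxA -veigE.
exact/horner_mx_eigen/veig_eigen.
Qed.

End BlockSum.

Theorem lemma2p7
  (n : nat) (M : 'M[int]_n)
  (* M_h is an automorphism of Lambda = Z^n of finite order *)
  (HMunit : M \in unitmx)
  (HMfin : exists m : nat, (0 < m)%N /\ M ^+ m = 1%:M)
  (k : nat) (d : 'I_k -> nat) (e : 'I_k -> 'rV[int]_n)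
  (C : forall i : 'I_k, 'M[int]_(d i))
  (* Lambda^(i) = Z-span of e_i, ..., M^(d_i - 1) e_i is an Orlik block *)
  (Hblock : forall i : 'I_k, orlik_block M (e i) (C i))
  (* the sum Lambda^(1) + ... + Lambda^(k) is direct *)
  (Hdirect : forall c : forall i : 'I_k, 'rV[int]_(d i),
      \sum_(i < k) c i *m cycmx (d i) M (e i) = 0 ->
      forall i, c i *m cycmx (d i) M (e i) = 0)
  (g : 'rV[int]_n -> 'rV[int]_n) :
  let inL (v : 'rV[int]_n) : Prop :=
    exists c : forall i : 'I_k, 'rV[int]_(d i),
      v = \sum_(i < k) c i *m cycmx (d i) M (e i) in
  (* g is an automorphism of Lambda^(1) + ... + Lambda^(k) commuting with M *)
  (forall u v, inL u -> inL v -> g (u + v) = g u + g v) ->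
  (forall v, inL v -> inL (g v)) ->
  (forall u v, inL u -> inL v -> g u = g v -> u = v) ->
  (forall w, inL w -> exists2 v, inL v & g v = w) ->
  (forall v, inL v -> g (v *m M) = g v *m M) ->
  exists p : 'I_k -> 'I_k -> {poly int},
    [/\ (forall i j, (size (p i j) <= d i)%N),
        (forall j, g (e j) = \sum_(i < k) polyact M (p i j) (e i)),
        (* uniqueness *)
        (forall p' : 'I_k -> 'I_k -> {poly int},
            (forall i j, (size (p' i j) <= d i)%N) ->
            (forall j, g (e j) = \sum_(i < k) polyact M (p' i j) (e i)) ->
            p' = p) &
        (* second part *)
        forall (p0 : {poly int}) (s : 'I_k -> {poly int}),
          (* p0 divides each p_{Lambda^(i)} in Z[t], with quotient s i *)
          (forall i, pLam (C i) = s i * p0) ->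
          (* g = id on Lambda^(j)_{p_{Lambda^(j)}/p0} *)
          (forall j v, in_Bp M (cycmx (d j) M (e j)) (s j) v -> g v = v) ->
          exists q : 'I_k -> 'I_k -> {poly int},
            [/\ (forall i j, (size (q i j) < size p0)%N),
                (forall i j, p i j = (i == j)%:R + s i * q i j) &
                forall xi : algC,
                  (exists m : nat, (0 < m)%N /\ xi ^+ m = 1) ->
                  root (map_poly toC p0) xi ->
                  (* GC : the C-linear extension of g to Lambda tensor C *)
                  forall GC : 'M[algC]_n,
                    (forall v, inL v -> map_mx toC (g v) = map_mx toC v *m GC) ->
                    forall j,
                      veig M (pLam (C j)) (e j) xi *m GC =
                      \sum_(i < k)
                        (map_poly toC ((i == j)%:R + s j * q i j)).[xi]
                          *: veig M (pLam (C i)) (e i) xi]].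
Proof.
case: n M HMunit HMfin e Hblock Hdirect g => [|n] M _ [m [m_gt0 Mm]] e block direct g.
  (* horner_mx needs a positive dimension; in dimension 0 there are no blocks. *)
  have no_block (i : 'I_k) : False by have := orlik_block_width_gt0 (block i).
  move=> inL _ _ _ _ _; exists (fun _ _ => 0); split=> [i|i|p' _ _|p0 s _ _].
  - by case: (no_block i).
  - by case: (no_block i).
  - by apply: functional_extensionality => i; case: (no_block i).
  by exists (fun _ _ => 0); split=> [i|i|xi _ _ GC _ i]; case: (no_block i).
move=> inL gD g_span _ _ gM.
have [p [size_p gej]] := block_coefs_exist block g_span.
exists p; split=> [//|j|p' size_p' gej'|p0 s C_fact fix_Bp].
- by rewrite gej; apply: eq_bigr => i _; rewrite polyactE.
- apply: functional_extensionality => i; apply: functional_extensionality => j.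
  apply: (block_coords_inj block direct (size_p' ^~ j) (size_p ^~ j)).
  by rewrite -gej gej'; apply: eq_bigr => l _; rewrite polyactE.
have fix_gen j : g (e j *m horner_mx M p0) = e j *m horner_mx M p0.
  by case: (block j) => d_gt0 _ EM _; apply/fix_Bp/(in_Bp_cofactor d_gt0 EM m_gt0 Mm).
have q_row i := fin_all_exists (fun j =>
  block_coefs_cofactor block direct gD gM C_fact (size_p ^~ j) (gej j) (fix_gen j) i).
have [q q_spec] := fin_all_exists q_row.
exists q; split=> [i j|i j|xi _ xi_root GC GC_ext j].
- by case: (q_spec i j).
- by case: (q_spec i j).
exact: (veig_image block gD gM GC_ext C_fact (gej j) (fun i => (q_spec i j).2) xi_root).
Qed.
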